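(* Let $k$ be a field of characteristic $0$ and let $F(X,Y), G(X,Y)\in k[X,Y]$ have total degree at most $n$ and satisfy $\det\begin{pmatrix}\partial F/\partial X & \partial F/\partial Y\\ \partial G/\partial X & \partial G/\partial Y\end{pmatrix}\in k^*$. Let $\mathcal{U}(t)=X+\sum_{i\ge1}u_i(X,Y)t^i$ and $\mathcal{V}(t)=Y+\sum_{i\ge1}v_i(X,Y)t^i$ (with $u_i,v_i\in k[X,Y]$) be the unique solution in $k[X,Y][[t]]$ of the system $$F(\mathcal{U}(t),\mathcal{V}(t))=tX+(1-t)F(X,Y),\qquad G(\mathcal{U}(t),\mathcal{V}(t))=tY+(1-t)G(X,Y),\qquad \mathcal{U}(0)=X,\ \mathcal{V}(0)=Y.$$ Let $\phi,\tau:k[X,Y]\to k[X,Y]$ be the $k$-algebra morphisms determined by $\phi(X)=F(X,Y)$, $\phi(Y)=G(X,Y)$, $\tau(X)=X+\sum_{i=1}^n u_i(X,Y)$, $\tau(Y)=Y+\sum_{i=1}^n v_i(X,Y)$. Then $\phi$ has a polynomial inverse (i.e. is an automorphism of $k[X,Y]$) if and only if $\phi\circ\tau=\mathrm{id}_{k[X,Y]}=\tau\circ\phi$.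
   Context: The existence and uniqueness of the power series solution $(\mathcal{U}(t),\mathcal{V}(t))$ under the Jacobian hypothesis is part of the setting (it holds). $k^*$ denotes the nonzero elements of $k$. *)

From HB Require Import structures.
From mathcomp Require Import all_boot all_order all_algebra.
From mathcomp Require Import mpoly.
Set Implicit Arguments. Unset Strict Implicit. Unset Printing Implicit Defensive.
Import Order.TTheory GRing.Theory.
Local Open Scope ring_scope.

(* k[X,Y] is {mpoly k[2]}; X = 'X_(var0), Y = 'X_(var1).
   k[X,Y][[t]] truncations are represented in {poly {mpoly k[2]}} (t = 'X). *)

Definition var0 : 'I_2 := @Ordinal 2 0 isT.
Definition var1 : 'I_2 := @Ordinal 2 1 isT.

Section Defs.
Variable k : fieldType.

Definition XX : {mpoly k[2]} := 'X_var0.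
Definition YY : {mpoly k[2]} := 'X_var1.

Definition jacobian (F G : {mpoly k[2]}) : {mpoly k[2]} :=
  F^`M(var0) * G^`M(var1) - F^`M(var1) * G^`M(var0).

Definition evalT (F : {mpoly k[2]}) (A B : {poly {mpoly k[2]}}) :
  {poly {mpoly k[2]}} :=
  mmap (fun c : k => (c%:MP)%:P) (tnth [tuple A; B]) F.

Definition trunc (x : {mpoly k[2]}) (w : nat -> {mpoly k[2]}) (m : nat) :
  {poly {mpoly k[2]}} :=
  x%:P + \sum_(1 <= i < m.+1) (w i)%:P * 'X^i.

Definition subst2 (A B : {mpoly k[2]}) (P : {mpoly k[2]}) : {mpoly k[2]} :=
  P \mPo [tuple A; B].

Definition is_automorphism (A B : {mpoly k[2]}) : Prop :=
  exists C D : {mpoly k[2]},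
    (forall P, subst2 A B (subst2 C D P) = P) /\
    (forall P, subst2 C D (subst2 A B P) = P).

End Defs.

(* If phi = (F, G) has a polynomial inverse psi = (C, D), substitute the line
   L(t) = (F + t (X - F), G + t (Y - G)) into psi.  Since F(C, D) = X and
   G(C, D) = Y, the pair (C(L), D(L)) solves the defining system; comparing it
   with the truncations of (U, V) modulo t^(m+1) shows that u_i and v_i are
   the t-coefficients of C(L) and D(L), which at t = 1 sum to C and D.
   Hence tau = psi once C(L) and D(L) have t-degree at most n.
   For h = C(L) this is an intersection count over K = Frac k[X,Y].  With
   rho = D(L), reducing (F, G)(h, rho) = L modulo h shows that
   L(t) = gamma(rho(t)) mod h, where gamma(s) = (F(0, s), G(0, s)) is the
   image of the Y-axis, a curve of degree at most n.  Unless gamma lies on the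
   line L, the quotient K[t]/(h) is then generated by rho, which is
   annihilated by a nonzero polynomial of degree at most n, so deg h <= n;
   if gamma lies on L, then h = 0.  The X-axis gives the bound for D(L). *)
From HB Require Import structures.
From mathcomp Require Import all_boot all_order all_algebra.
From mathcomp Require Import mpoly.
From mathcomp Require Import ring zify.
Import Order.TTheory GRing.Theory.
Local Open Scope ring_scope.
Set Implicit Arguments. Unset Strict Implicit. Unset Printing Implicit Defensive.

Definition eqmod (S : comPzRingType) (d x y : S) := exists q, x - y = q * d.

Section Eqmod.
Variables (S : comPzRingType) (d : S).

Lemma eqmodxx x : eqmod d x x.
Proof. by exists 0; rewrite subrr mul0r. Qed.

Lemma eqmodD x1 y1 x2 y2 :
  eqmod d x1 y1 -> eqmod d x2 y2 -> eqmod d (x1 + x2) (y1 + y2).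
Proof.
move=> [q1 /eqP]; rewrite subr_eq => /eqP-> [q2 /eqP]; rewrite subr_eq => /eqP->.
by exists (q1 + q2); ring.
Qed.

Lemma eqmodM x1 y1 x2 y2 :
  eqmod d x1 y1 -> eqmod d x2 y2 -> eqmod d (x1 * x2) (y1 * y2).
Proof.
move=> [q1 /eqP]; rewrite subr_eq => /eqP-> [q2 /eqP]; rewrite subr_eq => /eqP->.
by exists (q1 * (q2 * d + y2) + y1 * q2); ring.
Qed.

Lemma eqmodX x y m : eqmod d x y -> eqmod d (x ^+ m) (y ^+ m).
Proof.
move=> exy; elim: m => [|m IH]; first by rewrite !expr0; exact: eqmodxx.
by rewrite !exprS; apply: eqmodM.
Qed.

End Eqmod.

Lemma eqmod_dvdp (K : fieldType) (d p q : {poly K}) : eqmod d p q <-> d %| p - q.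
Proof. by split=> [[r e]|/dvdpP[r e]]; [apply/dvdpP; exists r | exists r]. Qed.

Lemma eqmod_XnP (R : comNzRingType) (m : nat) (p q : {poly R}) :
  eqmod 'X^m p q <-> forall j, (j < m)%N -> p`_j = q`_j.
Proof.
split=> [[r e] j ltjm|eq_pq].
  by apply/eqP; rewrite -subr_eq0 -coefB e coefMXn ltjm.
exists (drop_poly m (p - q)); rewrite -[LHS](poly_take_drop m) addrC.
suff -> : take_poly m (p - q) = 0 by rewrite addr0.
apply/polyP => j; rewrite coef_take_poly coefB coef0.
by case: ifP => // /eq_pq ->; rewrite subrr.
Qed.

Section Mmap.
Variables (n : nat) (R : nzRingType).
Implicit Types (p : {mpoly R[n]}).

Lemma eq_mmap (S : nzRingType) (f1 f2 : R -> S) (g1 g2 : 'I_n -> S) p :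
  f1 =1 f2 -> g1 =1 g2 -> mmap f1 g1 p = mmap f2 g2 p.
Proof.
by move=> ef eg; apply: eq_bigr => m _; rewrite ef (mmap1_eq _ eg).
Qed.

Lemma rmorph_mmap (S T : nzRingType) (th : {rmorphism S -> T})
    (f : R -> S) (g : 'I_n -> S) p :
  th (mmap f g p) = mmap (th \o f) (th \o g) p.
Proof.
rewrite rmorph_sum; apply: eq_bigr => m _.
by rewrite rmorphM rmorph_prod; congr (_ * _); apply: eq_bigr => i _; rewrite rmorphXn.
Qed.

Lemma mmap_comp (m : nat) (S : comNzRingType) (f : {rmorphism R -> S})
    (g : 'I_m -> S) p (lq : n.-tuple {mpoly R[m]}) :
  mmap f g (p \mPo lq) = mmap f (fun i => mmap f g (tnth lq i)) p.
Proof.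
by rewrite (rmorph_mmap (mmap f g)); apply: eq_mmap => // c /=; rewrite mmapC.
Qed.

Lemma eqmod_mmap (S : comNzRingType) (f : R -> S) (g1 g2 : 'I_n -> S) (d : S) p :
  (forall i, eqmod d (g1 i) (g2 i)) -> eqmod d (mmap f g1 p) (mmap f g2 p).
Proof.
move=> eg; apply: big_ind2 => [|x1 x2 y1 y2|m _]; first exact: eqmodxx.
  exact: eqmodD.
apply: eqmodM; first exact: eqmodxx.
by apply: big_ind2 => [|x1 x2 y1 y2|i _]; [exact: eqmodxx|exact: eqmodM|exact: eqmodX].
Qed.

Lemma size_mmap1_leq (T : comNzRingType) (g : 'I_n -> {poly T}) (s : nat) m :
  (forall i, size (g i) <= s.+1)%N -> (size (mmap1 g m) <= (mdeg m * s).+1)%N.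
Proof.
move=> sg; rewrite mdegE big_distrl /mmap1.
elim/big_ind2: _ => [|x1 e1 x2 e2 s1 s2|i _].
- by rewrite size_poly1.
- by rewrite (leq_trans (size_polyMleq _ _)) //; move: s1 s2 => /=; lia.
rewrite (leq_trans (size_poly_exp_leq _ _)) // ltnS mulnC leq_mul //.
by move: (sg i); case: (size (g i)).
Qed.

Lemma size_mmap_leq (T : comNzRingType) (f : R -> {poly T}) (g : 'I_n -> {poly T})
    (s : nat) p :
  (forall c, size (f c) <= 1)%N -> (forall i, size (g i) <= s.+1)%N ->
  (size (mmap f g p) <= ((msize p).-1 * s).+1)%N.
Proof.
move=> sf sg; rewrite /mmap big_seq.
apply: (big_ind (fun x : {poly T} => size x <= ((msize p).-1 * s).+1)%N).
- by rewrite size_poly0.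
- by move=> x y sx sy; rewrite (leq_trans (size_polyD _ _)) // geq_max sx sy.
move=> m /msize_mdeg_lt ltm; rewrite (leq_trans (size_polyMleq _ _)) //.
apply: (@leq_trans (1 + (mdeg m * s).+1).-1).
  by rewrite -!subn1 leq_sub2r ?leq_add ?size_mmap1_leq.
by rewrite add1n ltnS leq_mul2r -ltnS (ltn_predK ltm) ltm orbT.
Qed.

End Mmap.

Section Eval2.
Variable k : fieldType.
Implicit Types (p A B : {mpoly k[2]}).

Definition eval2 (S : comNzRingType) (f : {rmorphism k -> S}) p (a b : S) : S :=
  mmap f (tnth [tuple a; b]) p.

Lemma ord2P (i : 'I_2) : i = var0 \/ i = var1.
Proof. by case: i => [[|[|//]]] Hi; [left|right]; apply: val_inj. Qed.

Lemma subst2X A B : subst2 A B (XX k) = A.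
Proof. by rewrite /subst2 comp_mpolyXU. Qed.

Lemma subst2Y A B : subst2 A B (YY k) = B.
Proof. by rewrite /subst2 comp_mpolyXU. Qed.

Lemma subst2XY p : subst2 (XX k) (YY k) p = p.
Proof.
rewrite /subst2 -[RHS]comp_mpoly_id; congr (p \mPo _).
by apply: eq_from_tnth => i; rewrite tnth_map tnth_ord_tuple; case: (ord2P i) => ->.
Qed.

Variables (S : comNzRingType) (f : {rmorphism k -> S}).

Lemma eq_eval2 (f' : {rmorphism k -> S}) p a b :
  f =1 f' -> eval2 f p a b = eval2 f' p a b.
Proof. by move=> ef; apply: eq_mmap. Qed.

Lemma eval2X a b : eval2 f (XX k) a b = a.
Proof. by rewrite /eval2 mmapX mmap1U. Qed.

Lemma eval2Y a b : eval2 f (YY k) a b = b.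
Proof. by rewrite /eval2 mmapX mmap1U. Qed.

Lemma eval2_subst2 p A B a b :
  eval2 f (subst2 A B p) a b = eval2 f p (eval2 f A a b) (eval2 f B a b).
Proof. by rewrite /eval2 mmap_comp; apply: eq_mmap => // i; case: (ord2P i) => ->. Qed.

Lemma rmorph_eval2 (T : comNzRingType) (th : {rmorphism S -> T}) p a b :
  th (eval2 f p a b) = eval2 (th \o f) p (th a) (th b).
Proof. by rewrite /eval2 rmorph_mmap; apply: eq_mmap => // i; case: (ord2P i) => ->. Qed.

Lemma eqmod_eval2 (d : S) p a a' b b' :
  eqmod d a a' -> eqmod d b b' -> eqmod d (eval2 f p a b) (eval2 f p a' b').
Proof. by move=> ea eb; apply: eqmod_mmap => i; case: (ord2P i) => ->. Qed.

End Eval2.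

Section LineCurve.
Variable K : fieldType.
Implicit Types (d g p q r ρ σ : {poly K}).

Lemma eq_modp_dvdp d p q : d %| p - q -> p %% d = q %% d.
Proof. by move/modp_eq0/eqP; rewrite modpD modpN subr_eq0 => /eqP. Qed.

Lemma dvdp_comp_polyB d p q r : d %| p - q -> d %| (r \Po p) - (r \Po q).
Proof.
move=> dpq; rewrite !comp_polyE -sumrB.
elim/big_ind: _ => [|x y|i _]; [exact: dvdp0 | exact: dvdp_add |].
by rewrite -scalerBr -mul_polyC dvdp_mull // subrXX dvdp_mulr.
Qed.

Lemma comp_polyE_wide p q N :
  (size p <= N)%N -> p \Po q = \sum_(i < N) p`_i *: q ^+ i.
Proof.
move=> sp; rewrite comp_polyE (big_ord_widen N (fun i => p`_i *: q ^+ i) sp) big_mkcond.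
by apply: eq_bigr => i _; case: ltnP => // /(nth_default 0) ->; rewrite scale0r.
Qed.

Lemma eq0_of_comp_eqX p ρ σ : ρ \Po σ = 'X -> p \Po σ = 0 -> p = 0.
Proof.
move=> eX /eqP; rewrite comp_poly_eq0 => [/eqP //|].
rewrite ltnNge; apply/negP => /size1_polyC eσ.
by move: (size_polyX K); rewrite -eX eσ comp_polyCr size_polyC; case: (_ != 0).
Qed.

(* Modulo d, 'X is a polynomial in ρ and g(ρ) = 0, so the classes of ρ ^+ i for
   i < (size g).-1 span K[t]/(d), whose dimension is (size d).-1. *)
Lemma dvdp_generator_leq d g ρ σ :
  d != 0 -> g != 0 -> d %| g \Po ρ -> d %| 'X - (σ \Po ρ) -> (size d <= size g)%N.
Proof.
move=> d0 g0 dg dX; set D := (size d).-1; set N := (size g).-1.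
have [d_gt0 g_gt0] : (0 < size d)%N /\ (0 < size g)%N by rewrite !size_poly_gt0 d0 g0.
pose M := \matrix_(i < N) (poly_rV ((ρ ^+ i) %% d) : 'rV[K]_D).
have compM r : (size r <= N)%N -> poly_rV ((r \Po ρ) %% d) = poly_rV r *m M.
  move=> sr; rewrite (comp_polyE_wide _ sr).
  rewrite (big_morph (fun p => p %% d) (modpD d) (mod0p d)) linear_sum mulmx_sum_row.
  by apply: eq_bigr => i _; rewrite modpZl linearZ rowK mxE.
have sub1M : ((1%:M : 'M[K]_D) <= M)%MS.
  apply/row_subP => j; rewrite row1.
  have sXj : (size ('X^j : {poly K}) < size d)%N.
    by rewrite size_polyXn -(prednK d_gt0) ltnS ltn_ord.
  have -> : delta_mx 0 j = poly_rV ('X^j %% d) :> 'rV[K]_D.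
    by rewrite modp_small // -rVpoly_delta rVpolyK.
  pose r := ('X^j \Po σ) %% g.
  have sr : (size r <= N)%N by rewrite -ltnS prednK ?ltn_modp.
  rewrite (@eq_modp_dvdp _ _ (r \Po ρ)) ?compM ?submxMl //.
  have -> : 'X^j - (r \Po ρ) =
      ('X^j \Po 'X - ('X^j \Po (σ \Po ρ))) + ((('X^j \Po σ) %/ g) \Po ρ) * (g \Po ρ).
    rewrite comp_polyXr comp_polyA -comp_polyM {1}(divp_eq ('X^j \Po σ) g) -/r.
    by rewrite comp_polyD; ring.
  by rewrite dvdp_add ?dvdp_mull // dvdp_comp_polyB.
have := leq_trans (mxrankS sub1M) (rank_leq_row M); rewrite mxrank1 /D /N.
by rewrite -ltnS (prednK d_gt0) -[in X in _ -> X](prednK g_gt0).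
Qed.

Lemma exists_dual_eq1 (w1 w2 : K) :
  (w1 != 0) || (w2 != 0) -> exists w1' w2', w1 * w1' + w2 * w2' = 1.
Proof.
case/orP=> wn0; [exists w1^-1, 0 | exists 0, w2^-1];
  by rewrite ?mulr0 ?add0r ?addr0 mulfV.
Qed.

Lemma size_subC_mulC_leq p (b w : K) n :
  (size p <= n.+1)%N -> (size ((p - b%:P) * w%:P)%R <= n.+1)%N.
Proof.
move=> sp; rewrite mulrC mul_polyC (leq_trans (size_scale_leq _ _)) //.
rewrite (leq_trans (size_polyD _ _)) // size_polyN geq_max sp.
exact: leq_trans (size_polyC_leq1 _) _.
Qed.

(* The curve (p, q) meets the line t |-> (b1, b2) + t (w1, w2) at the
   parameter ρ modulo h.  With (w1', w2') dual to (w1, w2), σ below recovers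
   the line parameter from the curve and g is the equation of the line
   pulled back to the curve, so g = 0 means that the curve lies on the line. *)
Lemma size_leq_or_on_line h ρ p q (b1 b2 w1 w2 : K) n :
  (w1 != 0) || (w2 != 0) -> (size p <= n.+1)%N -> (size q <= n.+1)%N ->
  h %| (p \Po ρ) - (b1%:P + 'X * w1%:P) -> h %| (q \Po ρ) - (b2%:P + 'X * w2%:P) ->
  (size h <= n.+1)%N \/ exists σ, p = b1%:P + σ * w1%:P /\ q = b2%:P + σ * w2%:P.
Proof.
move=> /exists_dual_eq1[w1' [w2' w1w']] sp sq hp hq.
pose c := w1%:P * w1'%:P + w2%:P * w2'%:P : {poly K}.
have c1 : c = 1 by rewrite /c -!polyCM -polyCD w1w'.
pose σ := (p - b1%:P) * w1'%:P + (q - b2%:P) * w2'%:P.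
pose g := (p - b1%:P) * w2%:P - (q - b2%:P) * w1%:P.
have [g0|gn0] := eqVneq g 0.
  right; exists σ; split; apply/eqP; rewrite -subr_eq0.
    have -> : p - (b1%:P + σ * w1%:P) = (p - b1%:P) * (1 - c) + w2'%:P * g.
      by rewrite /σ /c /g; ring.
    by rewrite c1 g0 subrr !mulr0 addr0.
  have -> : q - (b2%:P + σ * w2%:P) = (q - b2%:P) * (1 - c) - w1'%:P * g.
    by rewrite /σ /c /g; ring.
  by rewrite c1 g0 subrr !mulr0 subr0.
have [->|hn0] := eqVneq h 0; first by left; rewrite size_poly0.
left; apply: leq_trans (_ : size g <= n.+1)%N; last first.
  by rewrite (leq_trans (size_polyD _ _)) // size_polyN geq_max !size_subC_mulC_leq.
apply: (dvdp_generator_leq (ρ := ρ) (σ := σ) hn0 gn0).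
  have -> : g \Po ρ = ((p \Po ρ) - (b1%:P + 'X * w1%:P)) * w2%:P
                    - ((q \Po ρ) - (b2%:P + 'X * w2%:P)) * w1%:P.
    by rewrite /g comp_polyB !comp_polyM !comp_polyB !comp_polyC; ring.
  by rewrite dvdp_sub ?dvdp_mulr.
have -> : 'X - (σ \Po ρ) = 'X * (1 - c) - (((p \Po ρ) - (b1%:P + 'X * w1%:P)) * w1'%:P
                    + ((q \Po ρ) - (b2%:P + 'X * w2%:P)) * w2'%:P).
  by rewrite /σ /c comp_polyD !comp_polyM !comp_polyB !comp_polyC; ring.
by rewrite c1 subrr mulr0 sub0r dvdpNr dvdp_add ?dvdp_mulr.
Qed.

End LineCurve.

Section InverseOnLine.
Variables (k K : fieldType) (f : {rmorphism k -> K}).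
Local Notation ev := (eval2 (polyC \o f)).
Implicit Types (p : {mpoly k[2]}) (a b x : {poly K}).

Lemma eval2_comp_poly p a b x : (ev p a b) \Po x = ev p (a \Po x) (b \Po x).
Proof.
rewrite -[_ \Po x]/(comp_poly x _) rmorph_eval2 /eval2.
by apply: eq_mmap => [c|//]; rewrite /= comp_polyC.
Qed.

Lemma size_eval2_leq p a b s :
  (size a <= s.+1)%N -> (size b <= s.+1)%N ->
  (size (ev p a b) <= ((msize p).-1 * s).+1)%N.
Proof.
move=> sa sb; apply: size_mmap_leq => [c|i]; first exact: size_polyC_leq1.
by case: (ord2P i) => ->.
Qed.

Variables (F G C D : {mpoly k[2]}) (n : nat).
Hypotheses (CFG : subst2 F G C = XX k) (DFG : subst2 F G D = YY k).
Hypotheses (FCD : subst2 C D F = XX k) (GCD : subst2 C D G = YY k).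
Hypotheses (sF : (msize F <= n.+1)%N) (sG : (msize G <= n.+1)%N).
Variables (b1 b2 w1 w2 : K).
Let L1 : {poly K} := b1%:P + 'X * w1%:P.
Let L2 : {poly K} := b2%:P + 'X * w2%:P.
Let h := ev C L1 L2.
Let r := ev D L1 L2.

Lemma size_eval2_line p a b :
  (msize p <= n.+1)%N -> (size a <= 2)%N -> (size b <= 2)%N ->
  (size (ev p a b) <= n.+1)%N.
Proof.
move=> sp sa sb; rewrite (leq_trans (size_eval2_leq _ sa sb)) // muln1.
by case: (msize p) sp.
Qed.

Lemma eval2_inverse_line : ev F h r = L1 /\ ev G h r = L2.
Proof. by rewrite -!eval2_subst2 FCD GCD eval2X eval2Y. Qed.

Lemma comp_inverse_line a b σ :
  ev F a b = b1%:P + σ * w1%:P -> ev G a b = b2%:P + σ * w2%:P ->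
  h \Po σ = a /\ r \Po σ = b.
Proof.
have Lσ (w c : K) : (c%:P + 'X * w%:P) \Po σ = c%:P + σ * w%:P.
  by rewrite comp_polyD comp_polyM !comp_polyC comp_polyX.
move=> eF eG; rewrite !eval2_comp_poly !Lσ -eF -eG -!eval2_subst2 CFG DFG.
by rewrite eval2X eval2Y.
Qed.

Lemma size_inverse_on_line : (size h <= n.+1)%N /\ (size r <= n.+1)%N.
Proof.
have [wn0|/norP[/negbNE/eqP w10 /negbNE/eqP w20]] := boolP ((w1 != 0) || (w2 != 0));
    last first.
  have sL (c : K) : (size (c%:P + 'X * 0%:P : {poly K})%R <= 1)%N.
    by rewrite mulr0 addr0 size_polyC_leq1.
  by rewrite /h /r /L1 /L2 w10 w20; split;
    rewrite (leq_trans (size_eval2_leq _ (sL b1) (sL b2))) // muln0.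
have [s0 sX] : (size (0 : {poly K})%R <= 2)%N /\ (size ('X : {poly K})%R <= 2)%N.
  by rewrite size_poly0 size_polyX.
have [FL GL] := eval2_inverse_line.
have e0 x : eqmod x 0 x by exists (-1); rewrite sub0r mulN1r.
split.
- have modh p : h %| (ev p 0 'X \Po r) - ev p h r.
    rewrite eval2_comp_poly comp_poly0 comp_polyX.
    by apply/eqmod_dvdp/eqmod_eval2; [exact: e0 | exact: eqmodxx].
  have hF := modh F; have hG := modh G; rewrite FL in hF; rewrite GL in hG.
  have [//|[σ [eF eG]]] := size_leq_or_on_line wn0
    (size_eval2_line sF s0 sX) (size_eval2_line sG s0 sX) hF hG.
  have [hσ rσ] := comp_inverse_line eF eG.
  by rewrite (eq0_of_comp_eqX rσ hσ) size_poly0.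
- have modr p : r %| (ev p 'X 0 \Po h) - ev p h r.
    rewrite eval2_comp_poly comp_poly0 comp_polyX.
    by apply/eqmod_dvdp/eqmod_eval2; [exact: eqmodxx | exact: e0].
  have rF := modr F; have rG := modr G; rewrite FL in rF; rewrite GL in rG.
  have [//|[σ [eF eG]]] := size_leq_or_on_line wn0
    (size_eval2_line sF sX s0) (size_eval2_line sG sX s0) rF rG.
  have [hσ rσ] := comp_inverse_line eF eG.
  by rewrite (eq0_of_comp_eqX hσ rσ) size_poly0.
Qed.

End InverseOnLine.

Lemma horner1_interp (S : comNzRingType) (a b : S) :
  ('X * a%:P + (1 - 'X) * b%:P).[1] = a.
Proof. by rewrite -polyC1 hornerD !hornerM hornerD hornerN !hornerX !hornerC; ring. Qed.

Lemma map_poly_interp (A B : comNzRingType) (φ : {rmorphism A -> B}) (a b : A) :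
  map_poly φ ('X * a%:P + (1 - 'X) * b%:P) = (φ b)%:P + 'X * (φ a - φ b)%:P.
Proof.
by rewrite rmorphD !rmorphM rmorphB rmorph1 /= map_polyX !map_polyC polyCB; ring.
Qed.

Section Series.
Variables (k : fieldType) (F G : {mpoly k[2]}).
Local Notation R := {mpoly k[2]}.
Let L1 : {poly R} := 'X * (XX k)%:P + (1 - 'X) * F%:P.
Let L2 : {poly R} := 'X * (YY k)%:P + (1 - 'X) * G%:P.

Lemma evalTE (P : R) A B : evalT P A B = eval2 (polyC \o @mpolyC 2 k) P A B.
Proof. by []. Qed.

Lemma size_trunc (x : R) w m : (size (trunc x w m) <= m.+1)%N.
Proof.
rewrite (leq_trans (size_polyD _ _)) // geq_max (leq_trans (size_polyC_leq1 _)) //=.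
rewrite big_nat; elim/big_ind: _ => [|p q sp sq|i /andP[_ im]].
- by rewrite size_poly0.
- by rewrite (leq_trans (size_polyD _ _)) // geq_max sp sq.
- rewrite (leq_trans (size_polyMleq _ _)) // size_polyXn addnS /=.
  by rewrite (leq_trans (leq_add (size_polyC_leq1 _) (leqnn _))).
Qed.

Lemma horner_trunc1 (x : R) w m : (trunc x w m).[1] = x + \sum_(1 <= i < m.+1) w i.
Proof.
rewrite hornerD hornerC horner_sum; congr (_ + _); apply: eq_bigr => i _.
by rewrite hornerM hornerC hornerXn expr1n mulr1.
Qed.

Lemma horner1_evalT (P : R) : (evalT P L1 L2).[1] = P.
Proof.
have e1 : horner_eval 1 L1 = XX k by rewrite horner_evalE horner1_interp.
have e2 : horner_eval 1 L2 = YY k by rewrite horner_evalE horner1_interp.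
rewrite -horner_evalE evalTE rmorph_eval2 -[RHS]subst2XY /eval2 /subst2 /comp_mpoly.
apply: eq_mmap => [c|i] /=; first exact: hornerC.
by case: (ord2P i) => ->; [exact: e1 | exact: e2].
Qed.

Lemma size_evalT_inverse (K : fieldType) (ι : {rmorphism R -> K}) (C D : R) n :
  injective ι ->
  subst2 F G C = XX k -> subst2 F G D = YY k ->
  subst2 C D F = XX k -> subst2 C D G = YY k ->
  (msize F <= n.+1)%N -> (msize G <= n.+1)%N ->
  (size (evalT C L1 L2) <= n.+1)%N /\ (size (evalT D L1 L2) <= n.+1)%N.
Proof.
move=> ιinj CFG DFG FCD GCD sF sG.
have size_map (p : {poly R}) : size (map_poly ι p) = size p.
  by apply: size_map_inj_poly; rewrite ?rmorph0.
have mapE P : map_poly ι (evalT P L1 L2) =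
    eval2 (polyC \o (ι \o @mpolyC 2 k)) P (map_poly ι L1) (map_poly ι L2).
  by rewrite evalTE rmorph_eval2; apply: eq_eval2 => c /=; rewrite map_polyC.
have [sC sD] := size_inverse_on_line (ι \o @mpolyC 2 k) CFG DFG FCD GCD sF sG
  (ι F) (ι G) (ι (XX k) - ι F) (ι (YY k) - ι G).
rewrite -!map_poly_interp -mapE size_map in sC.
rewrite -!map_poly_interp -mapE size_map in sD.
by split.
Qed.

Variables (u v : nat -> R).
Hypothesis HF : forall m j : nat, (j <= m)%N ->
  (evalT F (trunc (XX k) u m) (trunc (YY k) v m))`_j = L1`_j.
Hypothesis HG : forall m j : nat, (j <= m)%N ->
  (evalT G (trunc (XX k) u m) (trunc (YY k) v m))`_j = L2`_j.

Lemma evalT_trunc_coef (P : R) m j : (j <= m)%N ->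
  (evalT (subst2 F G P) (trunc (XX k) u m) (trunc (YY k) v m))`_j = (evalT P L1 L2)`_j.
Proof.
move=> jm; rewrite !evalTE eval2_subst2 -!evalTE.
suff /eqmod_XnP : eqmod 'X^(m.+1)
    (evalT P (evalT F (trunc (XX k) u m) (trunc (YY k) v m))
             (evalT G (trunc (XX k) u m) (trunc (YY k) v m)))
    (evalT P L1 L2) by apply.
rewrite !evalTE; apply: eqmod_eval2; apply/eqmod_XnP => i; rewrite ltnS.
  exact: HF.
exact: HG.
Qed.

Lemma series_sum_eq_inverse (P Z x : R) w n : subst2 F G P = Z ->
  (forall m, evalT Z (trunc (XX k) u m) (trunc (YY k) v m) = trunc x w m) ->
  (size (evalT P L1 L2) <= n.+1)%N -> x + \sum_(1 <= i < n.+1) w i = P.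
Proof.
move=> PZ eZ sP; rewrite -horner_trunc1 -[RHS]horner1_evalT; congr (_.[1]).
apply/polyP => j; have [jn|nj] := leqP j n.
  by rewrite -eZ -PZ evalT_trunc_coef.
by rewrite !nth_default // (leq_trans _ nj) ?size_trunc.
Qed.

End Series.

Theorem corollary3p3 (k : fieldType) (n : nat) (F G : {mpoly k[2]})
    (u v : nat -> {mpoly k[2]}) :
  [pchar k] =i pred0 ->
  (msize F <= n.+1)%N -> (msize G <= n.+1)%N ->
  (exists c : k, c != 0 /\ jacobian F G = c%:MP) ->
  (forall m j : nat, (j <= m)%N ->
     (evalT F (trunc (XX k) u m) (trunc (YY k) v m))`_j
       = ('X * (XX k)%:P + (1 - 'X) * F%:P)`_j) ->
  (forall m j : nat, (j <= m)%N ->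
     (evalT G (trunc (XX k) u m) (trunc (YY k) v m))`_j
       = ('X * (YY k)%:P + (1 - 'X) * G%:P)`_j) ->
  let tauX := XX k + \sum_(1 <= i < n.+1) u i in
  let tauY := YY k + \sum_(1 <= i < n.+1) v i in
  is_automorphism F G <->
    ((forall P, subst2 F G (subst2 tauX tauY P) = P) /\
     (forall P, subst2 tauX tauY (subst2 F G P) = P)).
Proof.
(* The characteristic and Jacobian hypotheses only serve the existence of the
   series (u, v), which is given here. *)
move=> _ sF sG _ HF HG tauX tauY.
split=> [[C [D [FG_CD CD_FG]]]|[FG_tau tau_FG]]; last by exists tauX, tauY.
have CFG := FG_CD (XX k); have DFG := FG_CD (YY k).
have FCD := CD_FG (XX k); have GCD := CD_FG (YY k).
rewrite !subst2X !subst2Y in CFG DFG FCD GCD.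
have tofrac_inj : injective (@tofrac {mpoly k[2]}).
  by move=> x y /eqP; rewrite tofrac_eq => /eqP.
have [sC sD] := size_evalT_inverse tofrac_inj CFG DFG FCD GCD sF sG.
have -> : tauX = C.
  by apply: (series_sum_eq_inverse HF HG CFG _ sC) => m; rewrite evalTE eval2X.
have -> : tauY = D.
  by apply: (series_sum_eq_inverse HF HG DFG _ sD) => m; rewrite evalTE eval2Y.
by split.
Qed.
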